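(* Let $\vec{D}_n$ be the oriented diameter of the directed arrowhead $\vec{\mathcal{AT}}_n$. Then $\vec{D}_0=0$ and $\vec{D}_n=2\vec{D}_{n-1}+1$ for all $n>0$.
   Context: For $n\in\mathbb{N}$ let $G_n=\mathbb{Z}_{2^n}\times\mathbb{Z}_{2^n}$ (additive group). Let $S^+=\{(-1,-1),(1,0),(0,1)\}$. The directed arrowhead $\vec{\mathcal{AT}}_n$ is the Cayley digraph $\Gamma(G_n,S^+)$: vertex set $G_n$, with an arc $u\to u+s$ for each $u\in G_n$ and $s\in S^+$ (arithmetic modulo $2^n$). The oriented diameter is the maximum, over ordered pairs $(u,v)$ of vertices, of the length of a shortest directed path from $u$ to $v$. *)

From mathcomp Require Import all_boot.
Set Implicit Arguments. Unset Strict Implicit. Unset Printing Implicit Defensive.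

Lemma pow2_gt0 (n : nat) : 0 < 2 ^ n.
Proof. by rewrite expn_gt0. Qed.

Definition Zm (n : nat) := 'I_(2 ^ n).
Definition G (n : nat) := (Zm n * Zm n)%type.

Definition addm (n : nat) (i : Zm n) (k : nat) : Zm n :=
  Ordinal (ltn_pmod (i + k) (pow2_gt0 n)).

(* Arcs of the Cayley digraph Gamma(G_n, S^+), S^+ = {(-1,-1),(1,0),(0,1)};
   -1 is represented as adding 2^n - 1 modulo 2^n. *)
Definition arc (n : nat) : rel (G n) := fun u v =>
  [|| v == (addm u.1 1, u.2),
      v == (u.1, addm u.2 1)
    | v == (addm u.1 (2 ^ n - 1), addm u.2 (2 ^ n - 1))].

Fixpoint walkb (n k : nat) (u v : G n) : bool :=
  match k with
  | 0 => u == v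
  | k'.+1 => [exists w : G n, arc u w && walkb k' w v]
  end.

(* Length of a shortest directed path from u to v: the least k with a walk
   of length k (searched among 0 .. |G_n|-1, which suffices since a shortest
   walk is a path; returns |G_n| if v is unreachable). *)
Definition dist (n : nat) (u v : G n) : nat :=
  find (fun k => walkb k u v) (iota 0 #|{: G n}|).

Definition odiam (n : nat) : nat :=
  \max_(u : G n) \max_(v : G n) dist u v.

From Pilot Require Import Defs.
From mathcomp Require Import all_boot zify.

Set Implicit Arguments.
Unset Strict Implicit.
Unset Printing Implicit Defensive.

(* Write N = 2^n. A walk with x arcs (1,0), y arcs (0,1) and z arcs (-1,-1)
   leads from u to v exactly when u.1 + x = v.1 + z and u.2 + y = v.2 + z
   modulo N, so dist u v is the least x + y + z solving these congruences.
   When 3 does not divide N, a short case analysis (z among 0, N - a, N - b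
   for the offsets a, b of v from u) always yields a solution of weight at
   most N - 1; the offset (N/3, N - 1 - N/3) admits none of smaller weight.
   Hence the oriented diameter is 2^n - 1, which satisfies the recursion. *)

Lemma eqn_modDpred (N m k : nat) : 0 < N ->
  (m + (N - 1) == k %[mod N]) = (m == k.+1 %[mod N]).
Proof.
by move=> N_gt0; rewrite -(eqn_modDr 1) -addnA subnK // modnDr addn1.
Qed.

Lemma modn_lt_double (N m : nat) : m < N + N -> m %% N = m \/ m %% N + N = m.
Proof.
move=> lt_m_2N; case: (ltnP m N) => lt_mN; first by left; rewrite modn_small.
right; have -> : m = (m - N) + N by lia.
by rewrite modnDr modn_small; lia.
Qed.

Lemma exists_offset (N p q : nat) : p < N ->
  exists2 a, a < N & p + a == q %[mod N].
Proof.
move=> lt_pN; exists ((q + (N - p)) %% N); first by rewrite ltn_pmod //; lia.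
by rewrite modnDmr addnCA subnKC 1?ltnW // modnDr.
Qed.

Lemma eqn_modD_offset (N p q a x z : nat) :
  p + a == q %[mod N] -> a + z == x %[mod N] -> p + x == q + z %[mod N].
Proof.
move=> /eqP Epa /eqP Eaz.
by rewrite -modnDmr -Eaz modnDmr addnA -modnDml Epa modnDml.
Qed.

Lemma exists_short_solution (N a b : nat) : 0 < N -> ~~ (3 %| N) -> a < N -> b < N ->
  exists x y z, [/\ x + y + z <= N - 1, a + z == x %[mod N] & b + z == y %[mod N]].
Proof.
move=> N_gt0 N3 lt_aN lt_bN.
suff [x [y [z [c1 [c2 [Hsum Ex Ey]]]]]] : exists x y z c1 c2,
    [/\ x + y + z <= N - 1, a + z = x + c1 * N & b + z = y + c2 * N].
  by exists x, y, z; rewrite Ex Ey !(addnC _ (_ * N)) !modnMDl.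
case: (leqP (a + b) (N - 1)) => h1; first by exists a, b, 0, 0, 0; split; lia.
case: (leqP a b) => hab.
- case: (leqP (b + 1) (2 * a)) => h2; first by exists 0, (b - a), (N - a), 1, 1; split; lia.
  case: (ltnP a b) => h3; last by exists 0, 0, (N - b), 1, 1; split; lia.
  case: (leqP (N + 1 + a) (2 * b)) => h4; last lia.
  by exists (a + N - b), 0, (N - b), 0, 1; split; lia.
- case: (leqP (a + 1) (2 * b)) => h2; first by exists (a - b), 0, (N - b), 1, 1; split; lia.
  case: (leqP (N + 1 + b) (2 * a)) => h4; last lia.
  by exists 0, (b + N - a), (N - a), 1, 0; split; lia.
Qed.

Lemma exists_far_offset (N : nat) : 0 < N -> exists a b, [/\ a < N, b < N &
  forall x y z, x == a + z %[mod N] -> y == b + z %[mod N] -> N - 1 <= x + y + z].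
Proof.
move=> N_gt0; exists (N %/ 3), (N - 1 - N %/ 3).
have := divn_eq N 3; have : N %% 3 < 3 by rewrite ltn_mod.
set a := N %/ 3; set r := N %% 3 => lt_r3 EN.
split; [lia | lia | move=> x y z /eqP Ex /eqP Ey].
case: (leqP (N - 1) (x + y + z)) => // small.
rewrite (@modn_small x) in Ex; last lia.
rewrite (@modn_small y) in Ey; last lia.
have [?|?] := @modn_lt_double N (a + z) ltac:(lia);
have [?|?] := @modn_lt_double N (N - 1 - a + z) ltac:(lia); lia.
Qed.

Lemma card_G (n : nat) : #|{: G n}| = 2 ^ n * 2 ^ n.
Proof. by rewrite card_prod card_ord. Qed.

Lemma pred_pow2_lt_card (n : nat) : 2 ^ n - 1 < #|{: G n}|.
Proof. by rewrite card_G; have := pow2_gt0 n; set N := 2 ^ n; nia. Qed.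

Section Walks.

Variable n : nat.
Local Notation N := (2 ^ n).

Lemma addm_eqmod (i : Zm n) (k m : nat) : addm i k + m = i + (k + m) %[mod N].
Proof. by rewrite /= modnDml addnA. Qed.

Lemma eq_G_modn (u v : G n) :
  u.1 == v.1 %[mod N] -> u.2 == v.2 %[mod N] -> u = v.
Proof.
case: u v => [u1 u2] [v1 v2] /=; rewrite !modn_small //.
by move=> /eqP/val_inj -> /eqP/val_inj ->.
Qed.

Lemma walkb_offsets (k : nat) (u v : G n) : walkb k u v ->
  exists x y z, [/\ x + y + z = k, u.1 + x == v.1 + z %[mod N]
                                 & u.2 + y == v.2 + z %[mod N]].
Proof.
elim: k u => [|k IH] u /=; first by move/eqP=> ->; exists 0, 0, 0.
case/existsP=> w /andP [arc_uw /IH [x [y [z [Hsum]]]]].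
case/or3P: arc_uw => /eqP -> /=; rewrite !addm_eqmod => E1 E2.
- by exists x.+1, y, z; rewrite add1n in E1; split; lia.
- by exists x, y.+1, z; rewrite add1n in E2; split; lia.
- exists x, y, z.+1.
  rewrite !addnA !(addnAC _ (N - 1)) !eqn_modDpred ?pow2_gt0 // -!addnS in E1 E2.
  by split; lia.
Qed.

Lemma offsets_walkb (x y z : nat) (u v : G n) :
  u.1 + x == v.1 + z %[mod N] -> u.2 + y == v.2 + z %[mod N] ->
  walkb (x + y + z) u v.
Proof.
move Hsum: (x + y + z) => k.
elim: k x y z u Hsum => [|k IH] x y z u Hsum E1 E2 /=.
  have [Ex Ey Ez] : [/\ x = 0, y = 0 & z = 0] by split; lia.
  by rewrite Ex Ey Ez !addn0 in E1 E2; rewrite (eq_G_modn E1 E2).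
apply/existsP; case: x Hsum E1 => [|x] Hsum E1.
  case: y Hsum E2 => [|y] Hsum E2.
    case: z Hsum E1 E2 => [|z] // Hsum E1 E2.
    exists (addm u.1 (N - 1), addm u.2 (N - 1)); rewrite /Defs.arc !eqxx !orbT /=.
    rewrite !addn0 !addnS in E1 E2.
    by apply: (IH 0 0 z); rewrite ?addm_eqmod ?addn0 ?eqn_modDpred ?pow2_gt0 //; lia.
  exists (u.1, addm u.2 1); rewrite /Defs.arc !eqxx orbT /=.
  by apply: (IH 0 y z) => //; [lia | rewrite addm_eqmod add1n].
exists (addm u.1 1, u.2); rewrite /Defs.arc !eqxx /=.
by apply: (IH x y z) => //; [lia | rewrite addm_eqmod add1n].
Qed.

Lemma dist_le_walkb (k : nat) (u v : G n) :
  k < #|{: G n}| -> walkb k u v -> dist u v <= k.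
Proof.
move=> lt_k_card walk_k; rewrite /dist; case: leqP => // lt_k_find.
by have := before_find 0 lt_k_find; rewrite nth_iota // add0n walk_k.
Qed.

Lemma dist_ge_no_walkb (k : nat) (u v : G n) : k <= #|{: G n}| ->
  (forall j, j < k -> ~~ walkb j u v) -> k <= dist u v.
Proof.
move=> le_k_card no_walk; rewrite /dist; set f := find _ _.
case: (leqP k f) => // lt_fk.
have lt_f_card := leq_trans lt_fk le_k_card.
have has_walk : has (fun j => walkb j u v) (iota 0 #|{: G n}|).
  by rewrite has_find size_iota.
by have := nth_find 0 has_walk; rewrite -/f nth_iota // add0n (negbTE (no_walk f lt_fk)).
Qed.

Lemma dist_le_pred_pow2 (u v : G n) : dist u v <= N - 1.
Proof.
have [a lt_aN Ea] := exists_offset v.1 (ltn_ord u.1).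
have [b lt_bN Eb] := exists_offset v.2 (ltn_ord u.2).
have N3 : ~~ (3 %| N) by rewrite Euclid_dvdX.
have [x [y [z [Hsum Ex Ey]]]] := exists_short_solution (pow2_gt0 n) N3 lt_aN lt_bN.
have walk := offsets_walkb (eqn_modD_offset Ea Ex) (eqn_modD_offset Eb Ey).
have lt_card := leq_ltn_trans Hsum (pred_pow2_lt_card n).
exact: leq_trans (dist_le_walkb lt_card walk) Hsum.
Qed.

Lemma exists_dist_ge_pred_pow2 : exists u v : G n, N - 1 <= dist u v.
Proof.
have N_gt0 := pow2_gt0 n.
have [a [b [lt_aN lt_bN far]]] := exists_far_offset N_gt0.
exists (Ordinal N_gt0, Ordinal N_gt0), (Ordinal lt_aN, Ordinal lt_bN).
apply: dist_ge_no_walkb; first exact: ltnW (pred_pow2_lt_card n).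
move=> j lt_j; apply/negP => /walkb_offsets [x [y [z [Hsum E1 E2]]]].
rewrite /= !add0n in E1 E2.
by have := far x y z E1 E2; lia.
Qed.

Lemma odiam_eq : odiam n = N - 1.
Proof.
apply/eqP; rewrite eqn_leq; apply/andP; split.
  by apply/bigmax_leqP => u _; apply/bigmax_leqP => v _; exact: dist_le_pred_pow2.
have [u [v le_dist]] := exists_dist_ge_pred_pow2.
apply: (leq_trans le_dist); apply: (leq_trans (leq_bigmax (F := dist u) v)).
exact: (leq_bigmax (F := fun u => \max_v dist u v) u).
Qed.

End Walks.

Theorem lemma3 :
  odiam 0 = 0 /\ (forall n : nat, 0 < n -> odiam n = 2 * odiam n.-1 + 1).
Proof.
split; first by rewrite odiam_eq.
case=> // n _; rewrite !odiam_eq /= expnS.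
by have := pow2_gt0 n; lia.
Qed.
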